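(* Let $n,k$ be integers with $1\le k\le n-2$ and let $c_0,\dots,c_{n-1}$ be real constants. For an ordered bid vector $b_1\ge\dots\ge b_n\ge 0$ define $r_i=c_0+c_1b_1+\dots+c_{i-1}b_{i-1}+c_ib_{i+1}+\dots+c_{n-1}b_n$ for $i=1,\dots,n$. Suppose that for every ordered bid vector $b_1\ge\dots\ge b_n\ge 0$ we have both $r_n\ge 0$ (IR$_u$) and $\sum_{i=1}^n r_i\le k\,b_k$ (Approx-IR$_M$). Then $c_i=0$ for $i=0,1,\dots,k-1$.
   Context: Here $r_i$ is the rebate given to the $i$-th highest included bidder in a block of $n$ included transactions of which the top $k$ are confirmed; $r_i$ depends only on the other bids, listed in decreasing order. *)

From mathcomp Require Import all_boot all_order all_algebra.
Set Implicit Arguments. Unset Strict Implicit. Unset Printing Implicit Defensive.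
Import Order.TTheory GRing.Theory Num.Theory.
Local Open Scope ring_scope.

(* Bids are 1-indexed: b 1, ..., b n (values of b outside 1..n are irrelevant).
   Constants c 0, ..., c (n-1). *)

Definition ordered_bids (R : realFieldType) (n : nat) (b : nat -> R) : Prop :=
  (forall i, (1 <= i < n)%N -> b i.+1 <= b i) /\ (forall i, (1 <= i <= n)%N -> 0 <= b i).

Definition rebate (R : realFieldType) (n : nat) (c b : nat -> R) (i : nat) : R :=
  c 0%N + \sum_(1 <= j < i) c j * b j + \sum_(i <= j < n) c j * b j.+1.

(** Induction on [m < k]: once [c 0 = ... = c (m-1) = 0], feed in the bid vector
    [1, ..., 1, 0, ..., 0] whose first [m] entries are [1].  Then [r_n = c m], so
    IR gives [c m >= 0]; now every summand of every rebate is nonnegative, while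
    Approx-IR bounds their total by [k * b_k = 0] because [m < k].  Hence
    [c m = r_n <= \sum_i r_i <= 0]. *)

From mathcomp Require Import all_boot all_order all_algebra.
From mathcomp Require Import zify.
Set Implicit Arguments. Unset Strict Implicit. Unset Printing Implicit Defensive.
Import Order.TTheory GRing.Theory Num.Theory.
Local Open Scope ring_scope.

Section Rebates.

Variables (R : realFieldType) (n : nat).

Lemma rebate_ge0 (c b : nat -> R) i :
  0 <= c 0%N -> (forall j, 0 <= c j * b j) -> (forall j, 0 <= c j * b j.+1) ->
  0 <= rebate n c b i.
Proof. by move=> c0 cb cb1; rewrite !addr_ge0 ?sumr_ge0. Qed.

Definition step_bids (m : nat) : nat -> R := fun j => (j <= m)%N%:R.

Lemma ordered_step_bids m : ordered_bids n (step_bids m).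
Proof.
split=> i _; rewrite /step_bids ?ler0n //.
by rewrite ler_nat; case: leqP => // /ltnW ->.
Qed.

Variables (c : nat -> R) (m : nat).
Hypothesis c_prefix0 : forall j, (j < m)%N -> c j = 0.

Lemma mul_step_bids_ge0 j i :
  0 <= c m -> (j <= i)%N -> 0 <= c j * step_bids m i.
Proof.
move=> cm_ge0 le_ji; rewrite /step_bids; case: leqP => [le_im|_]; last by rewrite mulr0.
by rewrite mulr1; case: ltngtP (leq_trans le_ji le_im) => [/c_prefix0->|//|->].
Qed.

Lemma rebate_last_step_bids : (m < n)%N -> rebate n c (step_bids m) n = c m.
Proof.
move=> lt_mn.
have -> : rebate n c (step_bids m) n = \sum_(0 <= j < n) c j * step_bids m j.
  by rewrite /rebate (big_geq (leqnn n)) addr0 [RHS]big_ltn ?mulr1 ?(leq_ltn_trans _ lt_mn).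
rewrite (bigD1_seq m) ?mem_index_iota ?iota_uniq //= big1 ?addr0.
  by rewrite /step_bids leqnn mulr1.
move=> j ne_jm; rewrite /step_bids.
by case: ltngtP ne_jm => // [/c_prefix0->|_] _; rewrite ?mul0r ?mulr0.
Qed.

End Rebates.

Section ApproxIR.

Variables (R : realFieldType) (n k : nat) (c : nat -> R).
Hypothesis lt_kn : (k < n)%N.
Hypothesis IR_u : forall b : nat -> R, ordered_bids n b -> 0 <= rebate n c b n.
Hypothesis approx_IR_M : forall b : nat -> R, ordered_bids n b ->
  \sum_(1 <= i < n.+1) rebate n c b i <= k%:R * b k.

Lemma coef_eq0_of_prefix0 m :
  (m < k)%N -> (forall j, (j < m)%N -> c j = 0) -> c m = 0.
Proof.
move=> lt_mk c_prefix0; pose b := step_bids R m.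
have b_ordered : ordered_bids n b := ordered_step_bids R n m.
have rn_eq : rebate n c b n = c m.
  exact: rebate_last_step_bids c_prefix0 (ltn_trans lt_mk lt_kn).
have cm_ge0 : 0 <= c m by rewrite -rn_eq; apply: IR_u.
have r_ge0 i : 0 <= rebate n c b i.
  have cb_ge0 j l : (j <= l)%N -> 0 <= c j * b l.
    exact: (mul_step_bids_ge0 (j:=j) (i:=l) c_prefix0 cm_ge0).
  apply: rebate_ge0 => [|j|j]; rewrite ?cb_ge0 //.
  by have := cb_ge0 0%N 0%N isT; rewrite /b /step_bids mulr1.
have sum_le0 : \sum_(1 <= i < n.+1) rebate n c b i <= 0.
  by have := approx_IR_M b_ordered; rewrite /b /step_bids leqNgt lt_mk mulr0.
apply/eqP; rewrite eq_le cm_ge0 andbT -rn_eq (le_trans _ sum_le0) //.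
by rewrite big_nat_recr ?lerDr ?sumr_ge0 // (leq_ltn_trans _ lt_kn).
Qed.

End ApproxIR.

Theorem claim2 (R : realFieldType) (n k : nat) (c : nat -> R) :
  (1 <= k)%N -> (k <= n - 2)%N ->
  (forall b : nat -> R, ordered_bids n b -> 0 <= rebate n c b n) ->
  (forall b : nat -> R, ordered_bids n b ->
     \sum_(1 <= i < n.+1) rebate n c b i <= k%:R * b k) ->
  forall i, (i < k)%N -> c i = 0.
Proof.
move=> k_ge1 le_kn2 IR_u approx_IR_M i.
have lt_kn : (k < n)%N by lia.
elim/ltn_ind: i => i IHi lt_ik.
apply: (coef_eq0_of_prefix0 lt_kn IR_u approx_IR_M lt_ik) => j lt_ji.
exact: IHi lt_ji (ltn_trans lt_ji lt_ik).
Qed.
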